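(* Let $\mathcal{H}$ be a real or complex Hilbert space and let $A$ be a finite-rank positive operator on $\mathcal{H}$ whose trace is an integer $k$. If $k\ge\operatorname{rank}(A)$, then $A$ is the sum of $k$ self-adjoint projections of rank one, i.e. there are unit vectors $x_1,\ldots,x_k\in\mathcal{H}$ with $A=\sum_{i=1}^k x_i\otimes x_i$.
   Context: For $x,y\in\mathcal{H}$, $x\otimes y$ denotes the rank-one operator $u\mapsto\langle u,y\rangle x$; if $\|x\|=1$, $x\otimes x$ is a rank-one orthogonal projection. *)

From mathcomp Require Import all_boot all_order all_algebra.
From mathcomp Require Import complex.
From mathcomp Require Import reals.
Set Implicit Arguments. Unset Strict Implicit. Unset Printing Implicit Defensive.
Import Order.TTheory GRing.Theory Num.Theory.
Local Open Scope ring_scope.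

Section Hilbert.
Variables (K : numFieldType) (cj : K -> K) (V : lmodType K) (ip : V -> V -> K).

Definition is_inner_product : Prop :=
  [/\ (forall (a : K) (x y z : V), ip (a *: x + y) z = a * ip x z + ip y z),
      (forall x y : V, ip x y = cj (ip y x)),
      (forall x : V, 0 <= ip x x) &
      (forall x : V, ip x x = 0 -> x = 0)].

Definition ip_complete : Prop :=
  forall u : nat -> V,
    (forall eps : K, 0 < eps -> exists N, forall m n, (N <= m)%N -> (N <= n)%N ->
         ip (u m - u n) (u m - u n) < eps) ->
    exists l : V, forall eps : K, 0 < eps -> exists N, forall n, (N <= n)%N ->
         ip (u n - l) (u n - l) < eps.

Definition is_hilbert_space : Prop := is_inner_product /\ ip_complete.

Definition bounded_op (A : V -> V) : Prop :=
  exists M : K, 0 <= M /\ forall x, ip (A x) (A x) <= M * ip x x.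

Definition positive_op (A : V -> V) : Prop :=
  (forall x y, ip (A x) y = ip x (A y)) /\ (forall x, 0 <= ip (A x) x).

Definition in_span (n : nat) (b : 'I_n -> V) (v : V) : Prop :=
  exists c : 'I_n -> K, v = \sum_(i < n) c i *: b i.

Definition lin_indep (n : nat) (b : 'I_n -> V) : Prop :=
  forall c : 'I_n -> K, \sum_(i < n) c i *: b i = 0 -> forall i, c i = 0.

Definition orthonormal (n : nat) (e : 'I_n -> V) : Prop :=
  forall i j : 'I_n, ip (e i) (e j) = (i == j)%:R.

Definition has_rank (A : V -> V) (r : nat) : Prop :=
  exists b : 'I_r -> V,
    [/\ lin_indep b, (forall i, exists u, A u = b i) & (forall u, in_span b (A u))].

Definition finite_rank (A : V -> V) : Prop := exists r, has_rank A r.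

(* trace of a finite-rank self-adjoint A: sum of <A e_i, e_i> over an
   orthonormal family e whose span contains the range of A (independent of
   the choice of such a family) *)
Definition has_trace (A : V -> V) (t : K) : Prop :=
  exists n (e : 'I_n -> V),
    [/\ orthonormal e, (forall u, in_span e (A u)) &
        \sum_(i < n) ip (A (e i)) (e i) = t].

Definition rank_one (x y : V) : V -> V := fun u => ip u y *: x.

Definition prop6_statement : Prop :=
  is_hilbert_space ->
  forall (A : {linear V -> V}) (k r : nat),
    bounded_op A -> positive_op A -> has_rank A r -> has_trace A k%:R ->
    (r <= k)%N ->
    exists x : 'I_k -> V,
      (forall i, ip (x i) (x i) = 1) /\
      forall u, A u = \sum_(i < k) rank_one (x i) (x i) u.

End Hilbert.

(* Splitting off the rank-one operator (Aw ⊗ Aw)/<Aw,w> from a positive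
   operator A leaves a positive operator whose range is orthogonal to w (a
   Cholesky factorisation); running w through a basis of the range of A writes
   A = Σ_l v_l ⊗ v_l with rank A vectors v_l in that range, so
   Σ_l |v_l|^2 = tr A = k, and zero vectors pad the family to k members.
   A rotation (v_i, v_j) ↦ (p v_i + q v_j, q v_i - p v_j), p^2 + q^2 = 1,
   preserves v_i ⊗ v_i + v_j ⊗ v_j and |v_i|^2 + |v_j|^2; when |v_i| > 1 > |v_j|
   it can be chosen to make the first vector a unit vector. Since the squared
   norms average to 1, such rotations make every vector a unit vector. *)

From HB Require Import structures.
From Pilot Require Import Defs.
From mathcomp Require Import all_boot all_order all_algebra.
From mathcomp Require Import complex.
From mathcomp Require Import reals.
From mathcomp Require Import ring.
Import Order.TTheory GRing.Theory Num.Theory.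
Local Open Scope ring_scope.
Set Implicit Arguments. Unset Strict Implicit. Unset Printing Implicit Defensive.

Definition extend T (x0 : T) r (v : 'I_r -> T) (n : nat) : T :=
  if insub n is Some l then v l else x0.

Lemma big_extend (W : nmodType) T (x0 : T) r k (v : 'I_r -> T) (F : T -> W) :
  (r <= k)%N -> F x0 = 0 -> \sum_(i < k) F (extend x0 v i) = \sum_(l < r) F (v l).
Proof.
move=> r_le_k F0; rewrite [RHS](eq_bigr (F \o extend x0 v \o val)) => [|l _]; last first.
  by rewrite /= /extend valK.
rewrite [RHS](big_ord_widen k (F \o extend x0 v)) // [RHS]big_mkcond /=.
by apply: eq_bigr => i _; case: ifPn => // i_ge_r; rewrite /extend insubN.
Qed.

Section InnerProductSpace.
Variables (K : numFieldType) (cj : {rmorphism K -> K}).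
Hypothesis cj_real : forall x, x \is Num.real -> cj x = x.
Hypothesis real_cj : forall x, cj x = x -> x \is Num.real.
Hypothesis mul_cj_gt0 : forall z, z != 0 -> 0 < z * cj z.
Hypothesis sqrt_ge0 : forall x : K, 0 <= x -> exists2 y, 0 <= y & y * y = x.
Variables (V : lmodType K) (ip : V -> V -> K).
Hypothesis hip : is_inner_product cj ip.

Lemma ipDZl a x y z : ip (a *: x + y) z = a * ip x z + ip y z.
Proof. by case: hip. Qed.

Lemma ipC x y : ip x y = cj (ip y x).
Proof. by case: hip. Qed.

Lemma ip_ge0 x : 0 <= ip x x.
Proof. by case: hip => _ _ + _; apply. Qed.

Lemma ip_eq0 x : ip x x = 0 -> x = 0.
Proof. by case: hip => _ _ _; apply. Qed.

Lemma ipDl x y z : ip (x + y) z = ip x z + ip y z.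
Proof. by have := ipDZl 1 x y z; rewrite scale1r mul1r. Qed.

Lemma ip0l z : ip 0 z = 0.
Proof. by apply: (addrI (ip 0 z)); rewrite -ipDl !addr0. Qed.

Lemma ipZl a x z : ip (a *: x) z = a * ip x z.
Proof. by have := ipDZl a x 0 z; rewrite addr0 ip0l addr0. Qed.

Lemma ipBl x y z : ip (x - y) z = ip x z - ip y z.
Proof. by rewrite -scaleN1r addrC ipDZl mulN1r addrC. Qed.

Lemma ipDr x y z : ip x (y + z) = ip x y + ip x z.
Proof. by rewrite ipC ipDl rmorphD -!ipC. Qed.

Lemma ipZr a x z : ip x (a *: z) = cj a * ip x z.
Proof. by rewrite ipC ipZl rmorphM -ipC. Qed.

Lemma ipBr x y z : ip x (y - z) = ip x y - ip x z.
Proof. by rewrite ipC ipBl rmorphB -!ipC. Qed.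

Lemma ip_suml I (r : seq I) (P : pred I) (F : I -> V) z :
  ip (\sum_(i <- r | P i) F i) z = \sum_(i <- r | P i) ip (F i) z.
Proof. by elim/big_rec2: _ => [|i s1 s2 _ <-]; rewrite ?ip0l ?ipDl. Qed.

Lemma ip_real x : ip x x \is Num.real.
Proof. exact: ger0_real (ip_ge0 x). Qed.

Lemma in_spanBZ n (b : 'I_n -> V) x y a :
  in_span b x -> in_span b y -> in_span b (x - a *: y).
Proof.
move=> [c ->] [d ->]; exists (fun i => c i - a * d i).
rewrite scaler_sumr -sumrB; apply: eq_bigr => i _.
by rewrite scalerBl scalerA.
Qed.

(* For [b ord0 = 0] the division by zero makes this the plain tail of [b]. *)
Definition orth_tail n (b : 'I_n.+1 -> V) (j : 'I_n) : V :=
  b (lift ord0 j) - (ip (b (lift ord0 j)) (b ord0) / ip (b ord0) (b ord0)) *: b ord0.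

Lemma in_span_orth_tail n (b : 'I_n.+1 -> V) x :
  in_span b x -> ip x (b ord0) = 0 -> in_span (orth_tail b) x.
Proof.
move=> [c ->]; set w := b ord0 => x_perp; exists (fun j => c (lift ord0 j)).
have -> : \sum_j c (lift ord0 j) *: orth_tail b j = \sum_j c (lift ord0 j) *: b (lift ord0 j)
    - ((\sum_j c (lift ord0 j) * ip (b (lift ord0 j)) w) / ip w w) *: w.
  rewrite mulr_suml scaler_suml -sumrB; apply: eq_bigr => j _.
  by rewrite scalerBr scalerA mulrA.
rewrite big_ord_recl -/w; have [->|w_neq0] := eqVneq w 0.
  by rewrite !scaler0 subr0 add0r.
have ww_neq0 : ip w w != 0 := contra_neq (@ip_eq0 w) w_neq0.
have -> : \sum_j c (lift ord0 j) * ip (b (lift ord0 j)) w = - (c ord0 * ip w w).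
  apply/eqP; rewrite -addr_eq0 addrC -ipZl; apply/eqP.
  by move: x_perp; rewrite big_ord_recl ipDl ip_suml; under eq_bigr do rewrite ipZl.
by rewrite mulNr mulfK // scaleNr opprK addrC.
Qed.

Section PositiveOperator.
Variable A : {linear V -> V}.
Hypothesis hA : positive_op ip A.

Let ipA_sym x y : ip (A x) y = ip x (A y). Proof. by case: hA. Qed.
Let ipA_ge0 x : 0 <= ip (A x) x. Proof. by case: hA. Qed.

Let cj_ipA x : cj (ip (A x) x) = ip (A x) x.
Proof. exact/cj_real/ger0_real. Qed.

Lemma ipA_shift u w a : ip (A (u + a *: w)) (u + a *: w) =
  ip (A u) u + cj a * ip (A u) w + a * cj (ip (A u) w) + a * cj a * ip (A w) w.
Proof.
rewrite linearD linearZ !ipDl !ipDr !ipZl !ipZr.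
rewrite [ip (A w) u]ipA_sym [ip w (A u)]ipC; ring.
Qed.

Lemma ipA_Cauchy_Schwarz u w :
  ip (A u) w * ip w (A u) <= ip (A u) u * ip (A w) w.
Proof.
rewrite [ip w _]ipC; set z := ip (A u) w; set p := ip (A u) u.
have p_ge0 : 0 <= p := ipA_ge0 u.
have [c0|c_neq0] := eqVneq (ip (A w) w) 0.
  rewrite c0 mulr0; have [->|/mul_cj_gt0 zz_gt0] := eqVneq z 0; first by rewrite mul0r.
  (* With <Aw,w> = 0, <A(u - tz w), u - tz w> = <Au,u> - 2t|z|^2 < 0 for large t. *)
  pose t := (p + 1) / (z * cj z).
  have cj_t : cj t = t.
    by apply/cj_real/ger0_real; rewrite /t divr_ge0 ?addr_ge0 // ltW.
  have := ipA_ge0 (u + (- (t * z)) *: w).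
  rewrite ipA_shift c0 mulr0 addr0 rmorphN rmorphM cj_t -/z -/p.
  have -> : p + - (t * cj z) * z + - (t * z) * cj z = - (p + 2).
    by rewrite /t; field; rewrite -negb_or -mulf_eq0 mulrC gt_eqF.
  have p2_gt0 : 0 < p + 2 by rewrite ltr_wpDl.
  by rewrite oppr_ge0 => /(lt_le_trans p2_gt0); rewrite ltxx.
set c := ip (A w) w in c_neq0 *.
have c_gt0 : 0 < c by rewrite lt_def c_neq0 ipA_ge0.
have cj_c : cj c = c := cj_ipA w.
have := ipA_ge0 (u + (- (z / c)) *: w).
rewrite ipA_shift -/c -/z -/p rmorphN rmorphM fmorphV cj_c.
have -> : p + - (cj z / c) * z + - (z / c) * cj z + - (z / c) * - (cj z / c) * c =
          (p * c - z * cj z) / c by field; rewrite gt_eqF.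
by rewrite pmulr_lge0 ?invr_gt0 // subr_ge0.
Qed.

Definition deflation (w u : V) : V := A u - (ip u (A w) / ip (A w) w) *: A w.

Lemma deflation_is_linear w : linear (deflation w).
Proof.
move=> a x y; rewrite /deflation linearP ipDZl mulrDl scalerDl -mulrA -scalerA.
by rewrite scalerBr opprD addrACA.
Qed.

HB.instance Definition _ w :=
  GRing.isLinear.Build K V V *:%R (deflation w) (deflation_is_linear w).

Section Deflation.
Variable w : V.
Hypothesis ipAw_gt0 : 0 < ip (A w) w.

Lemma deflation_positive : positive_op ip (deflation w).
Proof.
have cj_c := cj_ipA w; split=> x.
  move=> y; rewrite /deflation ipBl ipBr ipZl ipZr ipA_sym rmorphM fmorphV cj_c.
  by rewrite -ipC [ip (A w) y]ipA_sym; ring.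
rewrite /deflation ipBl ipZl -ipA_sym [ip (A w) x]ipA_sym subr_ge0 mulrAC.
by rewrite ler_pdivrMr // ipA_Cauchy_Schwarz.
Qed.

Lemma deflation_orthogonal u : ip (deflation w u) w = 0.
Proof. by rewrite ipBl ipZl divfK ?gt_eqF // ipA_sym subrr. Qed.

Lemma deflation_add_rank_one s u : 0 <= s -> s * s = ip (A w) w ->
  A u = deflation w u + rank_one ip (s^-1 *: A w) (s^-1 *: A w) u.
Proof.
move=> s_ge0 ss; rewrite /rank_one ipZr scalerA fmorphV (cj_real (ger0_real s_ge0)).
by rewrite mulrC mulrA -invfM ss mulrC /deflation subrK.
Qed.

End Deflation.

Lemma positive_op_split w : exists (B : {linear V -> V}) (v : V),
  [/\ positive_op ip B, forall u, ip (B u) w = 0, exists u, v = A u &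
      forall u, A u = B u + rank_one ip v v u].
Proof.
have [c0|c_neq0] := eqVneq (ip (A w) w) 0.
  exists A, 0; split=> //; last 2 first.
  - by exists 0; rewrite linear0.
  - by move=> u; rewrite /rank_one scaler0 addr0.
  move=> u; have := ipA_Cauchy_Schwarz u w; rewrite c0 mulr0 [ip w _]ipC.
  by have [//|/mul_cj_gt0/lt_le_trans lt/lt] := eqVneq (ip (A u) w) 0; rewrite ltxx.
have c_gt0 : 0 < ip (A w) w by rewrite lt_def c_neq0 ipA_ge0.
have [s s_ge0 ss] := sqrt_ge0 (ipA_ge0 w).
exists (deflation w), (s^-1 *: A w); split.
- exact: deflation_positive.
- exact: deflation_orthogonal.
- by exists (s^-1 *: w); rewrite linearZ.
- by move=> u; apply: deflation_add_rank_one.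
Qed.

End PositiveOperator.

Lemma positive_op_sum_rank_one m (b : 'I_m -> V) (A : {linear V -> V}) :
  positive_op ip A -> (forall u, in_span b (A u)) ->
  exists v : 'I_m -> V, (forall u, A u = \sum_(l < m) rank_one ip (v l) (v l) u)
                        /\ (forall l, exists u, v l = A u).
Proof.
elim: m b A => [|m IH] b A hA spanA.
  exists (fun _ => 0); split=> [u|[]//].
  by have [c ->] := spanA u; rewrite !big_ord0.
have [B [v0 [hB B_perp [u0 ->] AB]]] := positive_op_split hA (b ord0).
have B_eq u : B u = A u - ip u (A u0) *: A u0 by rewrite AB /rank_one addrK.
have spanB u : in_span (orth_tail b) (B u).
  by apply: in_span_orth_tail (B_perp u); rewrite B_eq; apply: in_spanBZ.
have [v [Bv rangev]] := IH _ B hB spanB.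
pose v' i := if unlift ord0 i is Some j then v j else A u0.
exists v'; split=> [u|i].
  rewrite big_ord_recl /v' unlift_none AB Bv addrC; congr (_ + _).
  by apply: eq_bigr => j _; rewrite liftK.
rewrite /v'; case: unliftP => [j _|_]; last by exists u0.
have [u ->] := rangev j; exists (u - ip u (A u0) *: u0).
by rewrite B_eq linearB [A (_ *: _)]linearZ.
Qed.

(* The qualification is needed: mathcomp's [orthonormal] shadows the one of Defs. *)
Lemma ip_orthonormal_expansion n (e : 'I_n -> V) (x y : V) :
  Defs.orthonormal ip e -> in_span e x -> ip x y = \sum_i ip x (e i) * ip (e i) y.
Proof.
move=> e_on [c ->]; rewrite ip_suml; apply: eq_bigr => i _; rewrite ipZl.
congr (_ * _); rewrite ip_suml (bigD1 i) //= ipZl e_on eqxx mulr1.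
by rewrite big1 ?addr0 // => j /negPf ji; rewrite ipZl e_on ji mulr0.
Qed.

Lemma trace_sum_rank_one n (e : 'I_n -> V) r (v : 'I_r -> V) :
  Defs.orthonormal ip e -> (forall l, in_span e (v l)) ->
  \sum_(i < n) ip (\sum_(l < r) rank_one ip (v l) (v l) (e i)) (e i) =
  \sum_(l < r) ip (v l) (v l).
Proof.
move=> e_on spanv; under eq_bigr do rewrite ip_suml.
rewrite exchange_big; apply: eq_bigr => l _ /=.
rewrite [RHS](ip_orthonormal_expansion _ e_on (spanv l)); apply: eq_bigr => i _.
by rewrite /rank_one ipZl mulrC.
Qed.

Section Rotation.
Variables (p q : K).
Hypotheses (cj_p : cj p = p) (cj_q : cj q = q) (pq1 : p * p + q * q = 1).

Lemma rank_one_rotation a b u :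
  rank_one ip (p *: a + q *: b) (p *: a + q *: b) u +
  rank_one ip (q *: a - p *: b) (q *: a - p *: b) u =
  rank_one ip a a u + rank_one ip b b u.
Proof.
rewrite /rank_one ipDr ipBr !ipZr cj_p cj_q !scalerDr scalerN !scalerA.
rewrite addrACA -scalerDl -scalerBl; congr (_ *: _ + _ *: _).
  by transitivity (ip u a * (p * p + q * q)); [ring | rewrite pq1 mulr1].
by transitivity (ip u b * (p * p + q * q)); [ring | rewrite pq1 mulr1].
Qed.

Lemma ip_rotation a b :
  ip (p *: a + q *: b) (p *: a + q *: b) + ip (q *: a - p *: b) (q *: a - p *: b) =
  ip a a + ip b b.
Proof.
rewrite !ipBl !ipBr !ipDl !ipDr !ipZl !ipZr cj_p cj_q.
by transitivity ((p * p + q * q) * (ip a a + ip b b)); [ring | rewrite pq1 mul1r].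
Qed.

End Rotation.

Lemma exists_unit_rotation a b : 1 < ip a a -> ip b b < 1 ->
  exists p q, [/\ cj p = p, cj q = q, p * p + q * q = 1 &
                  ip (p *: a + q *: b) (p *: a + q *: b) = 1].
Proof.
move=> a_gt1 b_lt1; set s := ip a b + ip b a.
have s_real : s \is Num.real by apply: real_cj; rewrite rmorphD -!ipC addrC.
set al := ip a a in a_gt1 *; set be := ip b b in b_lt1 *.
have al1_gt0 : 0 < al - 1 by rewrite subr_gt0.
(* |t a + b|^2 = 1 + t^2 is a quadratic equation in t whose leading and
   constant coefficients have opposite signs; take p, q = t, 1 normalised. *)
pose D := s * s - 4 * ((al - 1) * (be - 1)).
have D_ge0 : 0 <= D.
  rewrite addr_ge0 ?oppr_ge0 -?expr2 -?realEsqr // ltW // pmulr_rlt0 //.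
  by rewrite pmulr_rlt0 // subr_lt0.
have [r r_ge0 rr] := sqrt_ge0 D_ge0.
pose t := (r - s) / (2 * (al - 1)).
have den_gt0 : 0 < 2 * (al - 1) by rewrite mulr_gt0.
have t_real : t \is Num.real.
  by rewrite rpredM ?rpredB // ?ger0_real // invr_ge0 ltW.
have t_root : t * t * (al - 1) + t * s + (be - 1) = 0.
  rewrite (_ : _ + _ = (r * r - D) / (4 * (al - 1))); first by rewrite rr subrr mul0r.
  by rewrite /t /D; field; rewrite gt_eqF.
have tt1_gt0 : 0 < 1 + t * t by rewrite ltr_wpDr // -expr2 -realEsqr.
have [d d_ge0 dd] := sqrt_ge0 (ltW tt1_gt0).
have d_neq0 : d != 0 by apply: contraTneq tt1_gt0 => d0; rewrite -dd d0 mulr0 ltxx.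
have cj_d : cj d^-1 = d^-1 by rewrite cj_real // realV ger0_real.
exists (t / d), d^-1; split.
- by rewrite rmorphM cj_d cj_real.
- exact: cj_d.
- transitivity ((1 + t * t) / (d * d)); first by field.
  by rewrite dd divff // gt_eqF.
rewrite ipDl !ipDr !ipZl !ipZr rmorphM cj_d (cj_real t_real) -/al -/be.
have -> : t / d * (t / d * al) + t / d * (d^-1 * ip a b) +
    (d^-1 * (t / d * ip b a) + d^-1 * (d^-1 * be)) =
    (1 + t * t + (t * t * (al - 1) + t * s + (be - 1))) / (d * d).
  by rewrite /s; field.
by rewrite t_root addr0 dd divff // gt_eqF.
Qed.

Lemma real_sum_eq0_exists_gt0 k (g : 'I_k -> K) i0 :
  (forall i, g i \is Num.real) -> \sum_i g i = 0 -> g i0 != 0 -> exists i, 0 < g i.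
Proof.
move=> g_real g_sum gi0_neq0; apply/existsP; apply: contraT => /existsPn g_le0.
have Ng_ge0 i : true -> 0 <= - g i by rewrite oppr_ge0 real_leNgt ?g_real ?g_le0.
have Ng_sum : \sum_i - g i = 0 by rewrite sumrN g_sum oppr0.
by move: gi0_neq0; rewrite -oppr_eq0 (psumr_eq0P Ng_ge0 Ng_sum) ?eqxx.
Qed.

Lemma big_update2 (W : nmodType) T (F : T -> W) k (y : 'I_k -> T) i j a b :
  i != j -> F a + F b = F (y i) + F (y j) ->
  \sum_l F (if l == i then a else if l == j then b else y l) = \sum_l F (y l).
Proof.
move=> ij Fab; have ji : j != i by rewrite eq_sym.
rewrite [LHS](bigD1 i) // [RHS](bigD1 i) //= (bigD1 j) // [in RHS](bigD1 j) //=.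
rewrite eqxx (negPf ji) eqxx !addrA Fab; congr (_ + _).
by apply: eq_bigr => l /andP[/negPf-> /negPf->].
Qed.

Lemma unit_sum_rank_one k (y : 'I_k -> V) : \sum_i ip (y i) (y i) = k%:R ->
  exists x : 'I_k -> V, (forall i, ip (x i) (x i) = 1) /\
    forall u, \sum_i rank_one ip (y i) (y i) u = \sum_i rank_one ip (x i) (x i) u.
Proof.
have [n] := ubnP #|[set i | ip (y i) (y i) != 1]|.
elim: n y => // n IH y card_lt y_sum.
have [all1|[i0]] := set_0Vmem [set i | ip (y i) (y i) != 1].
  exists y; split=> // i; apply/eqP.
  by apply: (contraFT _ (in_set0 i)) => yi_neq1; rewrite -all1 inE.
rewrite inE => yi0_neq1.
pose g l := ip (y l) (y l) - 1.
have g_real l : g l \is Num.real by rewrite rpredB ?ip_real ?rpred1.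
have g_sum : \sum_l g l = 0 by rewrite sumrB y_sum sumr_const card_ord subrr.
have gi0_neq0 : g i0 != 0 by rewrite subr_eq0.
have [i yi_gt1] := real_sum_eq0_exists_gt0 g_real g_sum gi0_neq0.
rewrite subr_gt0 in yi_gt1.
have [j yj_lt1] : exists j, 0 < - g j.
  apply: (real_sum_eq0_exists_gt0 (i0 := i0)); first by move=> l; rewrite rpredN.
    by rewrite sumrN g_sum oppr0.
  by rewrite oppr_eq0.
rewrite oppr_gt0 subr_lt0 in yj_lt1.
have ij : i != j by apply: contraTneq yi_gt1 => ->; rewrite (lt_gtF yj_lt1).
have [p [q [cj_p cj_q pq1 unit_a]]] := exists_unit_rotation yi_gt1 yj_lt1.
pose y' l := if l == i then p *: y i + q *: y j
             else if l == j then q *: y i - p *: y j else y l.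
have card_lt' : (#|[set l | ip (y' l) (y' l) != 1%R]| < n)%N.
  move: card_lt; rewrite (cardsD1 i) inE gt_eqF // ltnS; apply: leq_ltn_trans.
  apply/subset_leq_card/subsetP => l; rewrite !inE /y'.
  case: (eqVneq l i) => [->|_]; first by rewrite unit_a eqxx.
  by case: (eqVneq l j) => [->|_] //; rewrite (lt_eqF yj_lt1).
have y'_sum : \sum_l ip (y' l) (y' l) = k%:R.
  by rewrite (big_update2 (F := fun v => ip v v)) // ip_rotation.
have [x [x_unit yx]] := IH y' card_lt' y'_sum.
exists x; split=> // u; rewrite -yx.
by rewrite (big_update2 (F := fun v => rank_one ip v v u)) // rank_one_rotation.
Qed.

Lemma positive_op_sum_unit_rank_one (A : {linear V -> V}) k r :
  positive_op ip A -> has_rank A r -> has_trace ip A k%:R -> (r <= k)%N ->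
  exists x : 'I_k -> V, (forall i, ip (x i) (x i) = 1) /\
    forall u, A u = \sum_(i < k) rank_one ip (x i) (x i) u.
Proof.
move=> hA [b [_ _ spanb]] [n [e [e_on spanAe trA]]] r_le_k.
have [v [Av rangev]] := positive_op_sum_rank_one hA spanb.
have spanv l : in_span e (v l) by have [u ->] := rangev l; apply: spanAe.
have v_sum : \sum_l ip (v l) (v l) = k%:R.
  by rewrite -trA -(trace_sum_rank_one e_on spanv); apply: eq_bigr => i _; rewrite Av.
have [|x [x_unit vx]] := unit_sum_rank_one (y := fun i : 'I_k => extend 0 v i).
  by rewrite (@big_extend _ _ 0 _ k v (fun z => ip z z)) ?ip0l.
exists x; split=> // u.
by rewrite Av -vx (@big_extend _ _ 0 _ k v (fun z => rank_one ip z z u)) // /rank_one scaler0.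
Qed.

End InnerProductSpace.

Theorem proposition6 :
  (forall (R : realType) (V : lmodType R) (ip : V -> V -> R),
      prop6_statement (fun z : R => z) ip) /\
  (forall (R : realType) (V : lmodType R[i]) (ip : V -> V -> R[i]),
      prop6_statement (fun z : R[i] => Num.conj z) ip).
Proof.
split=> R V ip [hip _] A k r _ hA rk tr r_le_k.
  apply: (@positive_op_sum_unit_rank_one R idfun _ _ _ _ V ip hip A k r hA rk tr r_le_k).
  - by [].
  - by move=> x _; apply: num_real.
  - by move=> z z_neq0; rewrite lt_def mulf_neq0 //= -expr2 sqr_ge0.
  - move=> x x_ge0; exists (Num.sqrt x); first exact: sqrtr_ge0.
    by rewrite -expr2 sqr_sqrtr.
apply: (@positive_op_sum_unit_rank_one R[i] Num.conj _ _ _ _ V ip hip A k r hA rk tr r_le_k).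
- exact: conj_Creal.
- by move=> x /eqP; rewrite CrealE.
- by move=> z; rewrite mul_conjC_gt0.
- move=> x x_ge0; exists (sqrtC x); first by rewrite sqrtC_ge0.
  by rewrite -expr2 sqrtCK.
Qed.
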